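(* Let $k$ be an algebraically closed field of characteristic $p>0$ and $H$ a finite-dimensional cocommutative connected Hopf algebra over $k$. Then every term $\Gamma^n(H)$, $n\ge0$, of the upper power series of $H$ is a normal Hopf subalgebra of $H$.
   Context: Connected: the coradical (sum of simple subcoalgebras) is one-dimensional. Coradical filtration: $H_n=\Delta^{-1}(H\otimes H_{n-1}+H_0\otimes H)$. Upper power series: $\Gamma^0(H)=k$, and for $n\ge1$ $\Gamma^n(H)$ is the subalgebra of $H$ generated by $H_{p^{n-1}}$. A Hopf subalgebra $K\subseteq H$ is normal if $\sum S(h_1)kh_2\in K$ and $\sum h_1kS(h_2)\in K$ for all $k\in K,h\in H$. *)

(* The tensor product H (x) H is modelled by coordinates in the fixed basis
   b := vbasis {:H} of H:  an element of H (x) H is a d x d matrix T over k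
   (d = dim H), T i j being the coefficient of b_i (x) b_j.
   H (x) H (x) H is modelled as d x (d*d) matrices (second and third factor
   flattened with mxvec). *)
From HB Require Import structures.
From mathcomp Require Import all_boot all_order all_algebra all_field.
Set Implicit Arguments. Unset Strict Implicit. Unset Printing Implicit Defensive.
Import Order.TTheory GRing.Theory Num.Theory.
Local Open Scope ring_scope.

Section Hopf.
Variables (k : fieldType) (H : falgType k).

Definition hdim := \dim {:H}.
Definition hbasis : hdim.-tuple H := vbasis {:H}.

Definition hcoord (x : H) : 'cV[k]_hdim := \col_i coord hbasis i x.

Definition tensor2 := 'M[k]_(hdim, hdim).
Definition tensor3 := 'M[k]_(hdim, hdim * hdim).

Definition tens (x y : H) : tensor2 := hcoord x *m (hcoord y)^T.
Definition tens3 (x y z : H) : tensor3 := hcoord x *m mxvec (tens y z).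

(* the linear extension to H (x) H of a (bilinear) map F : H -> H -> V,
   i.e. Sweedler sum  \sum F(t1, t2)  for t in H (x) H *)
Definition tsum (V : lmodType k) (F : H -> H -> V) (T : tensor2) : V :=
  \sum_(i < hdim) \sum_(j < hdim) T i j *: F hbasis`_i hbasis`_j.

Definition tmul (T U : tensor2) : tensor2 :=
  tsum (fun a b => tsum (fun c d => tens (a * c) (b * d)) U) T.

Definition tspace (U V : {vspace H}) : {vspace tensor2} :=
  <<[seq tens u v | u <- vbasis U, v <- vbasis V]>>%VS.

Definition is_hopf (D : H -> tensor2) (e : H -> k) (S : H -> H) : Prop :=
  [/\ linear D /\ scalar e /\ linear S,
      (* coassociativity: (D (x) id) D = (id (x) D) D *)
      forall x, tsum (fun a c => tsum (fun a1 a2 => tens3 a1 a2 c) (D a)) (D x)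
              = tsum (fun a c => tsum (fun c1 c2 => tens3 a c1 c2) (D c)) (D x),
      forall x, tsum (fun a b => e a *: b) (D x) = x /\
                tsum (fun a b => e b *: a) (D x) = x,
      ((D 1 = tens 1 1 /\ forall x y, D (x * y) = tmul (D x) (D y)) /\
       (e 1 = 1 /\ forall x y, e (x * y) = e x * e y)) &
      forall x, tsum (fun a b => S a * b) (D x) = e x *: 1 /\
                tsum (fun a b => a * S b) (D x) = e x *: 1].

Definition cocommutative (D : H -> tensor2) : Prop := forall x, (D x)^T = D x.

Definition subcoalgebra (D : H -> tensor2) (C : {vspace H}) : Prop :=
  forall x, x \in C -> D x \in tspace C C.

Definition simple_subcoalgebra (D : H -> tensor2) (C : {vspace H}) : Prop :=
  [/\ subcoalgebra D C, C != 0%VS &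
      forall C', subcoalgebra D C' -> (C' <= C)%VS -> C' = 0%VS \/ C' = C].

Definition is_coradical (D : H -> tensor2) (C0 : {vspace H}) : Prop :=
  (forall C, simple_subcoalgebra D C -> (C <= C0)%VS) /\
  exists s : seq {vspace H},
    (forall C, C \in s -> simple_subcoalgebra D C) /\
    C0 = (\sum_(C <- s) C)%VS.

Fixpoint coradfilt (D : H -> tensor2) (C0 : {vspace H}) (n : nat) : {vspace H} :=
  match n with
  | 0 => C0
  | m.+1 => (linfun D @^-1: (tspace fullv (coradfilt D C0 m) + tspace C0 fullv))%VS
  end.

Definition Gamma (D : H -> tensor2) (C0 : {vspace H}) (p n : nat) : {vspace H} :=
  match n with
  | 0 => (<[1]>)%VS
  | m.+1 => agenv (coradfilt D C0 (p ^ m))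
  end.

Definition hopf_subalgebra (D : H -> tensor2) (S : H -> H) (K : {vspace H}) : Prop :=
  [/\ 1 \in K, (K * K <= K)%VS, subcoalgebra D K
    & forall x, x \in K -> S x \in K].

Definition normal_hopf_subalgebra (D : H -> tensor2) (S : H -> H) (K : {vspace H}) : Prop :=
  hopf_subalgebra D S K /\
  forall x h, x \in K ->
    tsum (fun a b => S a * x * b) (D h) \in K /\
    tsum (fun a b => a * x * S b) (D h) \in K.

End Hopf.

(* Connectedness makes the coradical the line k1 (which is a simple
   subcoalgebra), so H_0 = k1 and Gamma^(m+1) is the subalgebra generated by
   the term H_(p^m) of the coradical filtration.  The argument has four steps:
   (1) in a cocommutative coalgebra each H_m is a subcoalgebra: D(H_m) lies
       in H_m (x) H and, by cocommutativity, in H (x) H_m;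
   (2) the subalgebra generated by a subcoalgebra is a subcoalgebra, as D is
       multiplicative; hence each Gamma^n is a sub-bialgebra;
   (3) a sub-bialgebra K of a finite-dimensional Hopf algebra is S-stable:
       x (x) y |-> (x (x) 1) D y is injective, hence bijective on K (x) K;
   (4) for convolution-inverse coalgebra maps f, g the action
       ad h x = sum f(h1) x g(h2) is, by cocommutativity, a coalgebra map in x
       and a measuring; so it preserves every H_m and the algebras they
       generate.  The pairs (S, id) and (id, S) give the two normality
       conditions. *)
From Pilot Require Import Defs.
From HB Require Import structures.
From mathcomp Require Import all_boot all_order all_algebra all_field.
Import GRing.Theory.
Local Open Scope ring_scope.

Set Implicit Arguments. Unset Strict Implicit. Unset Printing Implicit Defensive.

(* Linear maps are handled unbundled, through MathComp's predicate [linear f]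
   (resp. [scalar phi] for linear forms); this lets Sweedler sums take
   anonymous functions.  A linear function is packed into a [{linear _ -> _}]
   structure only to reuse the library's morphism lemmas. *)
Section LinearMap.
Variables (k : fieldType) (V W : lmodType k) (f : V -> W).
Hypothesis hf : linear f.

Let fL : {linear V -> W} := HB.pack f (GRing.isLinear.Build _ _ _ _ f hf).

Lemma linD u v : f (u + v) = f u + f v. Proof. exact: (raddfD fL). Qed.
Lemma linZ a u : f (a *: u) = a *: f u. Proof. exact: (linearZ_LR fL). Qed.
Lemma lin_sum I r (P : pred I) (F : I -> V) :
  f (\sum_(i <- r | P i) F i) = \sum_(i <- r | P i) f (F i).
Proof. exact: (raddf_sum fL). Qed.
End LinearMap.

Lemma lin_comp (k : fieldType) (U V W : lmodType k) (f : V -> W) (g : U -> V) :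
  linear f -> linear g -> linear (fun x => f (g x)).
Proof. by move=> hf hg a u v; rewrite hg hf. Qed.
Lemma lin_scale (k : fieldType) (U : lmodType k) (c : k) : linear (fun x : U => c *: x).
Proof. by move=> a u v; rewrite scalerDr !scalerA mulrC. Qed.
Lemma lin_smul (k : fieldType) (U V : lmodType k) (phi : U -> k) (w : V) :
  scalar phi -> linear (fun x => phi x *: w).
Proof. by move=> hp a u v; rewrite hp scalerDl scalerA. Qed.
Lemma lin_mull (k : fieldType) (A : algType k) (x : A) : linear (fun y => x * y).
Proof. by move=> a u v; rewrite mulrDr scalerAr. Qed.
Lemma lin_mulr (k : fieldType) (A : algType k) (x : A) : linear (fun y => y * x).
Proof. by move=> a u v; rewrite mulrDl scalerAl. Qed.

(* A linear function between finite-dimensional spaces, as an element of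
   'Hom(U, V), so that images, preimages and kernels are available. *)
Section LinearHom.
Variables (k : fieldType) (U V : vectType k) (f : U -> V).
Hypothesis hf : linear f.
Definition linhom : 'Hom(U, V) :=
  linfun (HB.pack f (GRing.isLinear.Build _ _ _ _ f hf) : {linear U -> V}).
Lemma linhomE x : linhom x = f x.
Proof. exact: lfunE. Qed.
End LinearHom.

Section Sweedler.
Variables (k : fieldType) (H : falgType k).
Local Notation d := (hdim H).
Local Notation b := (hbasis H).
Local Notation T2 := (tensor2 H).

Lemma hbasis_free : free b.
Proof. exact: basis_free (vbasisP fullv). Qed.
Lemma coord_hbasis (i j : 'I_d) : coord b i b`_j = (i == j)%:R.
Proof. by rewrite coord_free ?hbasis_free // eq_sym. Qed.
Lemma hbasis_expand (x : H) : x = \sum_i coord b i x *: b`_i.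
Proof. exact: coord_vbasis (memvf x). Qed.
Lemma coord_scalar i : scalar (coord b i).
Proof. by move=> a u v; rewrite linearP. Qed.

Lemma tensE (x y : H) (i j : 'I_d) : tens x y i j = coord b i x * coord b j y.
Proof. by rewrite !mxE big_ord1 !mxE. Qed.
Lemma tens_linl (y : H) : linear (fun x => tens x y).
Proof.
move=> a u v; apply/matrixP=> i j; rewrite tensE mxE [X in _ = X + _]mxE !tensE.
by rewrite coord_scalar mulrDl mulrA.
Qed.
Lemma tens_linr (x : H) : linear (tens x).
Proof.
move=> a u v; apply/matrixP=> i j; rewrite tensE mxE [X in _ = X + _]mxE !tensE.
by rewrite coord_scalar mulrDr mulrCA.
Qed.
Lemma tens_hbasis (i j : 'I_d) : tens b`_i b`_j = delta_mx i j.
Proof. by apply/matrixP=> r c; rewrite tensE !coord_hbasis mxE -natrM mulnb. Qed.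

Lemma tsum_tens_id (T : T2) : tsum (@tens _ H) T = T.
Proof.
rewrite {2}(matrix_sum_delta T); apply: eq_bigr => i _; apply: eq_bigr => j _.
by rewrite tens_hbasis.
Qed.

Definition bilinear (V : lmodType k) (F : H -> H -> V) :=
  (forall y, linear (F ^~ y)) /\ (forall x, linear (F x)).

Lemma bilinear_tens (f g : H -> H) :
  linear f -> linear g -> bilinear (fun a c => tens (f a) (g c)).
Proof.
move=> hf hg; split=> [y|x]; first exact: lin_comp (tens_linl _) hf.
exact: lin_comp (tens_linr _) hg.
Qed.

Section TsumValues.
Variable (V : lmodType k).
Implicit Types (F G : H -> H -> V) (T U : T2).

Lemma tsum_lin F : linear (tsum F).
Proof.
move=> a T U; rewrite /tsum scaler_sumr -big_split; apply: eq_bigr => i _ /=.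
rewrite scaler_sumr -big_split; apply: eq_bigr => j _ /=.
by rewrite !mxE scalerDl scalerA.
Qed.

Lemma tsum_lin_param (X : lmodType k) (F : X -> H -> H -> V) T :
  (forall a c, linear (fun x => F x a c)) -> linear (fun x => tsum (F x) T).
Proof.
move=> h a u v; rewrite /tsum scaler_sumr -big_split; apply: eq_bigr => i _ /=.
rewrite scaler_sumr -big_split; apply: eq_bigr => j _ /=.
by rewrite h scalerDr !scalerA mulrC.
Qed.

Lemma eq_tsum F G T : (forall a c, F a c = G a c) -> tsum F T = tsum G T.
Proof. by move=> h; apply: eq_bigr=> i _; apply: eq_bigr => j _; rewrite h. Qed.

Lemma eq_tsum_hbasis F G T :
  (forall i j : 'I_d, F b`_i b`_j = G b`_i b`_j) -> tsum F T = tsum G T.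
Proof. by move=> h; apply: eq_bigr=> i _; apply: eq_bigr => j _; rewrite h. Qed.

Lemma tsum_comp (W : lmodType k) (L : V -> W) F T :
  linear L -> L (tsum F T) = tsum (fun a c => L (F a c)) T.
Proof.
move=> hL; rewrite /tsum (lin_sum hL); apply: eq_bigr => i _.
by rewrite (lin_sum hL); apply: eq_bigr => j _; rewrite (linZ hL).
Qed.

Lemma tsum_tens F x y : bilinear F -> tsum F (tens x y) = F x y.
Proof.
move=> [h1 h2]; rewrite {2}(hbasis_expand x) (lin_sum (h1 y)).
apply: eq_bigr => i _; rewrite (linZ (h1 y)) {2}(hbasis_expand y).
rewrite (lin_sum (h2 _)) scaler_sumr.
by apply: eq_bigr => j _; rewrite (linZ (h2 _)) scalerA tensE.
Qed.

Lemma tsum_tr F T : tsum F T^T = tsum (fun a c => F c a) T.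
Proof.
rewrite /tsum exchange_big; apply: eq_bigr => i _; apply: eq_bigr => j _.
by rewrite mxE.
Qed.

Lemma tsum_exch (F : H -> H -> H -> H -> V) T U :
  tsum (fun a c => tsum (F a c) U) T = tsum (fun p q => tsum (fun a c => F a c p q) T) U.
Proof.
rewrite /tsum.
transitivity (\sum_i \sum_j \sum_i' \sum_j' (T i j * U i' j') *: F b`_i b`_j b`_i' b`_j').
  apply: eq_bigr => i _; apply: eq_bigr => j _; rewrite scaler_sumr.
  by apply: eq_bigr => i' _; rewrite scaler_sumr; apply: eq_bigr => j' _; rewrite scalerA.
symmetry.
transitivity (\sum_i' \sum_j' \sum_i \sum_j (T i j * U i' j') *: F b`_i b`_j b`_i' b`_j').
  apply: eq_bigr => i _; apply: eq_bigr => j _; rewrite scaler_sumr.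
  apply: eq_bigr => i' _; rewrite scaler_sumr; apply: eq_bigr => j' _.
  by rewrite scalerA mulrC.
under eq_bigr do rewrite exchange_big.
rewrite exchange_big; apply: eq_bigr => i _.
under eq_bigr do rewrite exchange_big.
by rewrite exchange_big.
Qed.

Lemma tsum_sumF (I : Type) (r : seq I) (F : I -> H -> H -> V) T :
  tsum (fun a c => \sum_(j <- r) F j a c) T = \sum_(j <- r) tsum (F j) T.
Proof.
rewrite /tsum; under eq_bigr do under eq_bigr do rewrite scaler_sumr.
under eq_bigr do rewrite exchange_big.
by rewrite exchange_big.
Qed.

End TsumValues.

Lemma tsum_tsum_tens (V : lmodType k) (F : H -> H -> V) (f g : H -> H) (T : T2) :
  bilinear F -> linear f -> linear g ->
  tsum F (tsum (fun a c => tens (f a) (g c)) T) = tsum (fun a c => F (f a) (g c)) T.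
Proof.
move=> hF hf hg; rewrite (tsum_comp _ _ (tsum_lin _)); apply: eq_tsum => a c.
exact: tsum_tens.
Qed.

Lemma sum_delta1 (X : lmodType k) (i : 'I_d) (f : 'I_d -> X) :
  \sum_j (j == i)%:R *: f j = f i.
Proof.
rewrite (bigD1 i) //= eqxx scale1r big1 ?addr0 // => j /negbTE ->.
by rewrite scale0r.
Qed.

Lemma tsum_mem (X : vectType k) (W : {vspace X}) (F : H -> H -> X) (T : T2) :
  (forall i j : 'I_d, F b`_i b`_j \in W) -> tsum F T \in W.
Proof.
move=> h; apply: memv_suml => i _; apply: memv_suml => j _; exact: memvZ.
Qed.

Lemma tens_mem (U V : {vspace H}) u v : u \in U -> v \in V -> tens u v \in tspace U V.
Proof.
move=> /coord_vbasis-> /coord_vbasis->.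
rewrite (lin_sum (tens_linl _)); apply: memv_suml => i _.
rewrite (linZ (tens_linl _)); apply: memvZ.
rewrite (lin_sum (tens_linr _)); apply: memv_suml => j _.
rewrite (linZ (tens_linr _)); apply: memvZ.
apply: memv_span; apply/allpairsP; exists ((vbasis U)`_i, (vbasis V)`_j).
by rewrite !mem_nth ?size_tuple.
Qed.

Lemma tspace_ind (X : vectType k) (W : {vspace X}) (Phi : T2 -> X) (U V : {vspace H}) T :
  linear Phi -> (forall u v, u \in U -> v \in V -> Phi (tens u v) \in W) ->
  T \in tspace U V -> Phi T \in W.
Proof.
move=> hP hW hT; rewrite -(linhomE hP) memv_preim.
apply: subvP hT; apply/span_subvP => _ /allpairsP[[u v] /= [hu hv ->]].
by rewrite -memv_preim linhomE hW ?vbasis_mem.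
Qed.

Lemma tspaceS (U U' V V' : {vspace H}) :
  (U <= U')%VS -> (V <= V')%VS -> (tspace U V <= tspace U' V')%VS.
Proof.
move=> sU sV; apply/subvP => T hT.
apply: (tspace_ind (Phi := id) _ _ hT) => // u v hu hv.
by apply: tens_mem; [apply: (subvP sU) | apply: (subvP sV)].
Qed.

Lemma bilinear_tmul_summand (U : T2) :
  bilinear (fun a c => tsum (fun a' c' => tens (a * a') (c * c')) U).
Proof.
split=> [y|x].
  apply: (@tsum_lin_param _ _ (fun a a' c' => tens (a * a') (y * c'))) => a' c'.
  exact: lin_comp (tens_linl _) (lin_mulr _).
apply: (@tsum_lin_param _ _ (fun c a' c' => tens (x * a') (c * c'))) => a' c'.
exact: lin_comp (tens_linr _) (lin_mulr _).
Qed.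

Lemma tmul_linl (U : T2) : linear (fun T : T2 => tmul T U).
Proof. exact: tsum_lin. Qed.
Lemma tmul_linr (T : T2) : linear (tmul T).
Proof.
apply: (@tsum_lin_param _ _ (fun U a c => tsum (fun a' c' => tens (a * a') (c * c')) U)).
by move=> a c; apply: tsum_lin.
Qed.

Lemma tsum_tmul (V : lmodType k) (G : H -> H -> V) (T U : T2) : bilinear G ->
  tsum G (tmul T U) = tsum (fun a c => tsum (fun a' c' => G (a * a') (c * c')) U) T.
Proof.
move=> hG; rewrite /tmul (tsum_comp _ _ (tsum_lin G)); apply: eq_tsum => a c.
rewrite (tsum_comp _ _ (tsum_lin G)); apply: eq_tsum => a' c'.
exact: tsum_tens.
Qed.

Lemma tmul_tensl (x y : H) (U : T2) :
  tmul (tens x y) U = tsum (fun a c => tens (x * a) (y * c)) U.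
Proof. by rewrite /tmul tsum_tens //; apply: bilinear_tmul_summand. Qed.
Lemma tmul_tensr (T : T2) (x y : H) :
  tmul T (tens x y) = tsum (fun a c => tens (a * x) (c * y)) T.
Proof.
rewrite /tmul; apply: eq_tsum => a c; rewrite tsum_tens //.
exact: bilinear_tens (lin_mull _) (lin_mull _).
Qed.
Lemma tmul1 (U : T2) : tmul (tens 1 1) U = U.
Proof. by rewrite tmul_tensl -[RHS]tsum_tens_id; apply: eq_tsum => a c; rewrite !mul1r. Qed.

Lemma tmulA (A B C : T2) : tmul (tmul A B) C = tmul A (tmul B C).
Proof.
rewrite {1}/tmul tsum_tmul; last exact: bilinear_tmul_summand.
rewrite /tmul; apply: eq_tsum => a c.
rewrite -/(tmul B C) tsum_tmul; last exact: bilinear_tens (lin_mull _) (lin_mull _).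
by apply: eq_tsum => a' c'; apply: eq_tsum => a'' c''; rewrite !mulrA.
Qed.

Lemma tmul3 (T1 T2' T3 : T2) : tmul (tmul T1 T2') T3 =
  tsum (fun a c => tsum (fun a' c' => tsum (fun a'' c'' =>
     tens (a * a' * a'') (c * c' * c'')) T3) T2') T1.
Proof. by rewrite {1}/tmul tsum_tmul //; apply: bilinear_tmul_summand. Qed.

Lemma tmul_mem (A : {vspace H}) (T U : T2) :
  (A * A <= A)%VS -> T \in tspace A A -> U \in tspace A A -> tmul T U \in tspace A A.
Proof.
move=> hA hT hU.
apply: (tspace_ind (Phi := fun T => tmul T U) _ _ hT); first exact: tmul_linl.
move=> a c ha hc; rewrite tmul_tensl.
apply: (tspace_ind _ _ hU); first exact: tsum_lin.
move=> u v hu hv; rewrite tsum_tens; last exact: bilinear_tens (lin_mull a) (lin_mull c).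
by apply: tens_mem; apply: (subvP hA); apply: memv_mul.
Qed.

Definition conr (phi : H -> k) (T : T2) := tsum (fun a c => phi c *: a) T.
Definition conl (phi : H -> k) (T : T2) := tsum (fun a c => phi a *: c) T.

Lemma conr_mem phi (U V : {vspace H}) T :
  scalar phi -> T \in tspace U V -> conr phi T \in U.
Proof.
move=> hp hT; apply: (tspace_ind (Phi := conr phi) _ _ hT); first exact: tsum_lin.
move=> u v hu hv; rewrite /conr tsum_tens ?memvZ //.
by split=> [y|x]; [apply: lin_scale | apply: lin_smul].
Qed.

Lemma expand_r (T : T2) : T = \sum_(j < d) tens (conr (coord b j) T) b`_j.
Proof.
transitivity (\sum_(j < d) tsum (fun a c => coord b j c *: tens a b`_j) T).
  rewrite -tsum_sumF -[LHS]tsum_tens_id; apply: eq_tsum => a c.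
  rewrite {1}(hbasis_expand c) (lin_sum (tens_linr _)); apply: eq_bigr => j _.
  by rewrite (linZ (tens_linr _)).
apply: eq_bigr => j _; rewrite /conr (tsum_comp _ _ (tens_linl _)).
by apply: eq_tsum => a c; rewrite (linZ (tens_linl _)).
Qed.
Lemma expand_l (T : T2) : T = \sum_(j < d) tens b`_j (conl (coord b j) T).
Proof.
transitivity (\sum_(j < d) tsum (fun a c => coord b j a *: tens b`_j c) T).
  rewrite -tsum_sumF -[LHS]tsum_tens_id; apply: eq_tsum => a c.
  rewrite {1}(hbasis_expand a) (lin_sum (tens_linl _)); apply: eq_bigr => j _.
  by rewrite (linZ (tens_linl _)).
apply: eq_bigr => j _; rewrite /conl (tsum_comp _ _ (tens_linr _)).
by apply: eq_tsum => a c; rewrite (linZ (tens_linr _)).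
Qed.

Definition idt (f : H -> H) (T : T2) := tsum (fun a c => tens a (f c)) T.
Lemma idt_lin f : linear (idt f). Proof. exact: tsum_lin. Qed.
Lemma idt_tens f x y : linear f -> idt f (tens x y) = tens x (f y).
Proof.
move=> hf; rewrite /idt tsum_tens //.
by split=> [z|z]; [apply: tens_linl | apply: lin_comp (tens_linr _) hf].
Qed.
Lemma idt_mem f (U V V' : {vspace H}) T : linear f -> (forall v, v \in V -> f v \in V') ->
  T \in tspace U V -> idt f T \in tspace U V'.
Proof.
move=> hf hV hT; apply: (tspace_ind _ _ hT); first exact: idt_lin.
by move=> u v hu hv; rewrite idt_tens // tens_mem // hV.
Qed.

(* (U (x) H) meets (H (x) V) inside U (x) V: a tensor with first legs in U
   (w.r.t. the basis in the second factor) and second legs in V (w.r.t. the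
   basis in the first factor) belongs to U (x) V. *)
Lemma tspace_cap (U V : {vspace H}) (T : T2) (y z : 'I_d -> H) :
  (forall j, y j \in U) -> (forall j, z j \in V) ->
  T = \sum_(j < d) tens (y j) b`_j -> T = \sum_(j < d) tens b`_j (z j) ->
  T \in tspace U V.
Proof.
move=> hy hz Ey Ez.
have lP : linear (projv V) by move=> a u v; rewrite linearP.
have -> : T = idt (projv V) T.
  rewrite {2}Ez (lin_sum (idt_lin _)) {1}Ez; apply: eq_bigr => j _.
  by rewrite idt_tens // projv_id.
rewrite Ey (lin_sum (idt_lin _)); apply: memv_suml => j _.
by rewrite idt_tens // tens_mem // memv_proj.
Qed.
End Sweedler.

(* Triple tensors: [t3 G] is the linear extension to H (x) H (x) H of a
   trilinear G; it is only needed to transport coassociativity, which Defs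
   states on [tens3], to arbitrary trilinear functions. *)
Section TripleTensor.
Variables (k : fieldType) (H : falgType k) (V : lmodType k).
Local Notation b := (hbasis H).

Definition t3 (G : H -> H -> H -> V) (M : tensor3 H) : V :=
  \sum_i \sum_j \sum_l M i (mxvec_index j l) *: G b`_i b`_j b`_l.

Lemma t3_lin G : linear (t3 G).
Proof.
move=> a M N; rewrite /t3 scaler_sumr -big_split; apply: eq_bigr => i _ /=.
rewrite scaler_sumr -big_split; apply: eq_bigr => j _ /=.
rewrite scaler_sumr -big_split; apply: eq_bigr => l _ /=.
by rewrite !mxE scalerDl scalerA.
Qed.

Lemma t3_tens G (i j l : 'I_(hdim H)) : t3 G (tens3 b`_i b`_j b`_l) = G b`_i b`_j b`_l.
Proof.
rewrite /t3 -[RHS](sum_delta1 i (fun i' => G b`_i' b`_j b`_l)); apply: eq_bigr => i' _.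
rewrite -[G b`_i' b`_j b`_l](sum_delta1 j (fun j' => G b`_i' b`_j' b`_l)) scaler_sumr.
apply: eq_bigr => j' _.
rewrite -[G b`_i' b`_j' b`_l](sum_delta1 l (fun l' => G b`_i' b`_j' b`_l')) !scaler_sumr.
apply: eq_bigr => l' _.
by rewrite !mxE big_ord1 mxE mxvecE tensE !coord_hbasis !scalerA mulrA.
Qed.
End TripleTensor.

Section HopfAlgebra.
Variables (k : fieldType) (H : falgType k).
Local Notation d := (hdim H).
Local Notation b := (hbasis H).
Local Notation T2 := (tensor2 H).
Variables (D : H -> T2) (e : H -> k) (S : H -> H).
Hypothesis hH : is_hopf D e S.
Hypothesis cc : cocommutative D.

Lemma lin_D : linear D. Proof. by case: hH => -[h _] _ _ _ _. Qed.
Lemma scalar_e : scalar e. Proof. by case: hH => -[_ [h _]] _ _ _ _. Qed.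
Lemma lin_S : linear S. Proof. by case: hH => -[_ [_ h]] _ _ _ _. Qed.
Lemma coassoc x : tsum (fun a c => tsum (fun a1 a2 => tens3 a1 a2 c) (D a)) (D x)
              = tsum (fun a c => tsum (fun c1 c2 => tens3 a c1 c2) (D c)) (D x).
Proof. by case: hH => _ h _ _ _. Qed.
Lemma counit_l x : tsum (fun a c => e a *: c) (D x) = x.
Proof. by case: hH => _ _ h _ _; case: (h x). Qed.
Lemma counit_r x : tsum (fun a c => e c *: a) (D x) = x.
Proof. by case: hH => _ _ h _ _; case: (h x). Qed.
Lemma D1 : D 1 = tens 1 1. Proof. by case: hH => _ _ _ [[h _] _] _. Qed.
Lemma DM x y : D (x * y) = tmul (D x) (D y). Proof. by case: hH => _ _ _ [[_ h] _] _. Qed.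
Lemma antipode_l x : tsum (fun a c => S a * c) (D x) = e x *: 1.
Proof. by case: hH => _ _ _ _ h; case: (h x). Qed.
Lemma antipode_r x : tsum (fun a c => a * S c) (D x) = e x *: 1.
Proof. by case: hH => _ _ _ _ h; case: (h x). Qed.

Lemma coassocG (V : lmodType k) (G : H -> H -> H -> V) x :
  tsum (fun a c => tsum (fun a1 a2 => G a1 a2 c) (D a)) (D x)
  = tsum (fun a c => tsum (fun c1 c2 => G a c1 c2) (D c)) (D x).
Proof.
have := congr1 (t3 G) (coassoc x).
rewrite !(tsum_comp _ _ (t3_lin G)).
under eq_tsum do rewrite (tsum_comp _ _ (t3_lin G)).
under [RHS]eq_tsum do rewrite (tsum_comp _ _ (t3_lin G)).
move=> h.
transitivity (tsum (fun a c => tsum (fun a1 a2 => t3 G (tens3 a1 a2 c)) (D a)) (D x)).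
  by apply: eq_tsum_hbasis => i j; apply: eq_tsum_hbasis => i' j'; rewrite t3_tens.
rewrite h; apply: eq_tsum_hbasis => i j; apply: eq_tsum_hbasis => i' j'; exact: t3_tens.
Qed.

Lemma cocomG (V : lmodType k) (F : H -> H -> V) x :
  tsum F (D x) = tsum (fun a c => F c a) (D x).
Proof. by rewrite -{1}(cc x) tsum_tr. Qed.

Lemma counitL (V : lmodType k) (L : H -> V) x : linear L ->
  tsum (fun a c => e a *: L c) (D x) = L x.
Proof.
move=> hL; rewrite -{2}(counit_l x) (tsum_comp _ _ hL).
by apply: eq_tsum => a c; rewrite (linZ hL).
Qed.
Lemma counitR (V : lmodType k) (L : H -> V) x : linear L ->
  tsum (fun a c => e c *: L a) (D x) = L x.
Proof.
move=> hL; rewrite -{2}(counit_r x) (tsum_comp _ _ hL).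
by apply: eq_tsum => a c; rewrite (linZ hL).
Qed.
Lemma antiL (V : lmodType k) (L : H -> V) x : linear L ->
  tsum (fun a c => L (S a * c)) (D x) = e x *: L 1.
Proof. by move=> hL; rewrite -(linZ hL) -antipode_l (tsum_comp _ _ hL). Qed.
Lemma antiR (V : lmodType k) (L : H -> V) x : linear L ->
  tsum (fun a c => L (a * S c)) (D x) = e x *: L 1.
Proof. by move=> hL; rewrite -(linZ hL) -antipode_r (tsum_comp _ _ hL). Qed.

(* The antipode is an anti-coalgebra map: D (S x) = sum S(x2) (x) S(x1).
   Both sides are convolution inverses of D in Hom(H, H (x) H); the proof
   compares  (D o S) * D * sigma  computed in the two possible ways. *)
Definition Sop x := tsum (fun a c => tens (S c) (S a)) (D x).

Lemma lin_Sop : linear Sop.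
Proof. exact: lin_comp (tsum_lin _) lin_D. Qed.

Lemma D_conv_Sop x : tsum (fun a c => tmul (D a) (Sop c)) (D x) = e x *: tens 1 1.
Proof.
transitivity (tsum (fun a c => tsum (fun a1 a2 =>
     tsum (fun p q => tens (a1 * S q) (a2 * S p)) (D c)) (D a)) (D x)).
  apply: eq_tsum => a c; rewrite /Sop (tsum_comp _ _ (tmul_linr _)).
  rewrite tsum_exch; apply: eq_tsum => p q; exact: tmul_tensr.
rewrite (coassocG (fun a1 a2 c => tsum (fun p q => tens (a1 * S q) (a2 * S p)) (D c))).
transitivity (tsum (fun a c => tens (a * S c) 1) (D x)).
  apply: eq_tsum => a c.
  rewrite -(coassocG (fun c1 p q => tens (a * S q) (c1 * S p))).
  transitivity (tsum (fun r q => e r *: tens (a * S q) 1) (D c)).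
    apply: eq_tsum => r q.
    rewrite -(tsum_comp (fun c1 p => c1 * S p) _ (tens_linr (a * S q))) antipode_r.
    by rewrite (linZ (tens_linr _)).
  by rewrite (counitL _ (lin_comp (tens_linl _) (lin_comp (lin_mull _) lin_S))).
by rewrite -(tsum_comp (fun a c => a * S c) _ (tens_linl 1)) antipode_r (linZ (tens_linl _)).
Qed.

Lemma DS_conv_D a : tsum (fun a1 a2 => tmul (D (S a1)) (D a2)) (D a) = e a *: tens 1 1.
Proof. by under eq_tsum do rewrite -DM; rewrite (antiL _ lin_D) D1. Qed.

(* Uniqueness of convolution inverses. *)
Lemma D_S_op x : D (S x) = Sop x.
Proof.
rewrite -(counitR _ (lin_comp lin_D lin_S)).
transitivity (tsum (fun a c => tmul (D (S a))
                  (tsum (fun p q => tmul (D p) (Sop q)) (D c))) (D x)).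
  apply: eq_tsum => a c; rewrite D_conv_Sop (linZ (tmul_linr _)).
  rewrite tmul_tensr; under eq_tsum do rewrite !mulr1.
  by rewrite tsum_tens_id.
under eq_tsum do rewrite (tsum_comp _ _ (tmul_linr _)).
rewrite -(coassocG (fun a p q => tmul (D (S a)) (tmul (D p) (Sop q)))).
under eq_tsum do under eq_tsum do rewrite -tmulA.
under eq_tsum do rewrite -(tsum_comp _ _ (tmul_linl _)) DS_conv_D (linZ (tmul_linl _)) tmul1.
exact: (counitL _ lin_Sop).
Qed.

Lemma DS x : D (S x) = tsum (fun a c => tens (S a) (S c)) (D x).
Proof. by rewrite D_S_op /Sop cocomG. Qed.

(* Connectedness: the line k1 is a simple subcoalgebra, so a one-dimensional
   coradical must be k1. *)
Lemma line1_coalg : subcoalgebra D <[1]>%VS.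
Proof.
move=> x /vlineP[c ->]; rewrite (linZ lin_D) D1.
by apply: memvZ; apply: tens_mem; apply: memv_line.
Qed.

Lemma line1_simple : simple_subcoalgebra D <[1]>%VS.
Proof.
have dim1 : \dim <[1 : H]> = 1%N by rewrite dim_vline oner_neq0.
split; first exact: line1_coalg.
  by rewrite -dimv_eq0 dim1.
move=> C' _ sub; have := dimvS sub; rewrite dim1 leq_eqVlt ltnS leqn0 orbC.
case/orP=> /eqP hC'; first by left; apply/eqP; rewrite -dimv_eq0 hC'.
by right; apply/eqP; rewrite eqEdim sub dim1 hC' /=.
Qed.

Lemma coradical_line1 C0 : is_coradical D C0 -> \dim C0 = 1%N -> C0 = <[1]>%VS.
Proof.
move=> [hC _] hd; apply/eqP; rewrite eq_sym eqEdim (hC _ line1_simple).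
by rewrite dim_vline oner_neq0 hd.
Qed.

Local Notation Hf := (coradfilt D <[1]>%VS).

Lemma linfunD x : linfun D x = D x.
Proof. exact: (linhomE lin_D x). Qed.

Lemma memHfS x m :
  (x \in Hf m.+1) = (D x \in (tspace fullv (Hf m) + tspace <[1]> fullv)%VS).
Proof. by rewrite /= -memv_preim linfunD. Qed.

Lemma D_conr phi x : scalar phi ->
  D (conr phi (D x)) = idt (fun c => conr phi (D c)) (D x).
Proof.
move=> hp; rewrite /conr (tsum_comp _ _ lin_D).
transitivity (tsum (fun a c => tsum (fun a1 a2 => phi c *: tens a1 a2) (D a)) (D x)).
  apply: eq_tsum => a c; rewrite (linZ lin_D).
  by rewrite -{1}(tsum_tens_id (D a)) (tsum_comp _ _ (lin_scale _)).
rewrite (coassocG (fun a1 a2 c => phi c *: tens a1 a2)).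
rewrite /idt; apply: eq_tsum => a c.
rewrite (tsum_comp _ _ (tens_linr _)); apply: eq_tsum => c1 c2.
by rewrite (linZ (tens_linr _)).
Qed.

(* Step (1): each term of the coradical filtration is a subcoalgebra.  By
   induction, the first legs of D x lie in H_{m+1} (coassociativity); by
   cocommutativity so do the second legs. *)
Lemma coradfilt_coalg m : subcoalgebra D (Hf m).
Proof.
elim: m => [|m IH] x; first exact: line1_coalg.
move=> hx.
pose y (j : 'I_d) := conr (coord b j) (D x).
have hy : forall j, y j \in Hf m.+1.
  move=> j; rewrite memHfS /y (D_conr _ (coord_scalar j)).
  move: hx; rewrite memHfS => /memv_addP[T1 h1 [T2 h2 ->]].
  have lpsi : linear (fun c => conr (coord b j) (D c)).
    exact: lin_comp (tsum_lin _) lin_D.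
  rewrite (linD (idt_lin _)); apply: memv_add.
    apply: (idt_mem lpsi _ h1) => v hv.
    by apply: conr_mem (IH _ hv); apply: coord_scalar.
  by apply: (idt_mem lpsi _ h2) => v _; apply: memvf.
apply: (tspace_cap hy hy); first exact: expand_r.
rewrite {1}(expand_l (D x)); apply: eq_bigr => j _; congr tens.
by rewrite /y /conr /conl cocomG.
Qed.

Lemma agenv_coalg (U : {vspace H}) : subcoalgebra D U -> subcoalgebra D (agenv U).
Proof.
move=> hU.
have hAA : (agenv U * agenv U <= agenv U)%VS by rewrite agenvM subvv.
suff sW : (agenv U <= linhom lin_D @^-1: tspace (agenv U) (agenv U))%VS.
  by move=> x /(subvP sW); rewrite -memv_preim linhomE.
apply: agenv_sub_modl.
  rewrite -memvE -memv_preim linhomE D1.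
  by apply: tens_mem; rewrite memvE; apply: sub1_agenv.
apply/prodvP => u w hu hw; rewrite -memv_preim linhomE DM.
apply: tmul_mem => //; last by move: hw; rewrite -memv_preim linhomE.
by apply: (subvP (tspaceS (sub_agenv U) (sub_agenv U))); apply: hU.
Qed.

(* Step (3): S-stability of sub-bialgebras.  The map
   phiT : x (x) y |-> (x (x) 1) D y  has the left inverse
   psiT : x (x) y |-> sum x S(y1) (x) y2,  so it is injective. *)
Definition phiT (T : T2) := tsum (fun a c => tmul (tens a 1) (D c)) T.
Definition psiF (a c : H) := tsum (fun c1 c2 => tens (a * S c1) c2) (D c).
Definition psiT (T : T2) := tsum psiF T.

Lemma bilinear_psiF : bilinear psiF.
Proof.
split=> [y|x]; last exact: lin_comp (tsum_lin _) lin_D.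
apply: (@tsum_lin_param _ _ _ _ (fun a c1 c2 => tens (a * S c1) c2)) => c1 c2.
exact: lin_comp (tens_linl _) (lin_mulr _).
Qed.

Lemma psi_phi T : psiT (phiT T) = T.
Proof.
rewrite /psiT /phiT (tsum_comp _ _ (tsum_lin _)) -[RHS]tsum_tens_id.
apply: eq_tsum => a c.
rewrite tmul_tensl (tsum_comp _ _ (tsum_lin _)).
under eq_tsum do rewrite (tsum_tens _ _ bilinear_psiF) /psiF mul1r.
rewrite -(coassocG (fun a' q1 q2 => tens (a * a' * S q1) q2)).
transitivity (tsum (fun r q2 => e r *: tens a q2) (D c)).
  apply: eq_tsum => r q2.
  under eq_tsum do rewrite -mulrA.
  by rewrite (antiR _ (lin_comp (tens_linl q2) (lin_mull a))) mulr1.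
exact: (counitL _ (tens_linr _)).
Qed.

(* phiT maps K (x) K into itself injectively, hence onto (finite dimension);
   a preimage T of 1 (x) x gives S x = sum e(T2) T1 in K. *)
Lemma S_stable (K : {vspace H}) : 1 \in K -> (K * K <= K)%VS -> subcoalgebra D K ->
  forall x, x \in K -> S x \in K.
Proof.
move=> h1 hKK hK x hx.
have lphi : linear phiT by exact: tsum_lin.
have phiK : forall T, T \in tspace K K -> phiT T \in tspace K K.
  move=> T hT; apply: (tspace_ind _ _ hT) => // a c ha hc.
  rewrite /phiT tsum_tens; last first.
    by split=> y; [apply: lin_comp (tmul_linl _) (tens_linl _)
                 | apply: lin_comp (tmul_linr _) lin_D].
  by apply: tmul_mem => //; [apply: tens_mem | apply: hK].
pose f := linhom lphi.
have inj : lker f == 0%VS.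
  by apply/lker0P => u v; rewrite !linhomE => h; rewrite -(psi_phi u) h psi_phi.
have onto : (f @: tspace K K)%VS = tspace K K.
  apply/eqP; rewrite eqEdim limg_dim_eq ?leqnn ?andbT; last by rewrite (eqP inj) capv0.
  by apply/subvP => _ /memv_imgP[T hT ->]; rewrite linhomE phiK.
have : tens 1 x \in (f @: tspace K K)%VS by rewrite onto tens_mem.
case/memv_imgP => T hT; rewrite linhomE => hT1.
have : conr e (psiT (tens 1 x)) \in K.
  by rewrite hT1 psi_phi; apply: (conr_mem scalar_e hT).
rewrite /psiT (tsum_tens _ _ bilinear_psiF) /psiF /conr (tsum_comp _ _ (tsum_lin _)).
rewrite (eq_tsum (G := fun a c => e c *: S a)); first by rewrite (counitR _ lin_S).
move=> a c; rewrite tsum_tens ?mul1r //.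
by split=> z; [apply: lin_scale | apply: lin_smul scalar_e].
Qed.

Lemma swap_middle (V : lmodType k) (K : H -> H -> H -> H -> V) h :
  tsum (fun u v => tsum (fun u1 u2 => tsum (fun v1 v2 => K u1 u2 v1 v2) (D v)) (D u)) (D h)
  = tsum (fun u v => tsum (fun u1 u2 => tsum (fun v1 v2 => K u1 v1 u2 v2) (D v)) (D u)) (D h).
Proof.
rewrite (coassocG (fun u1 u2 v => tsum (fun v1 v2 => K u1 u2 v1 v2) (D v))).
rewrite (coassocG (fun u1 u2 v => tsum (fun v1 v2 => K u1 v1 u2 v2) (D v))).
apply: eq_tsum => u w.
rewrite -(coassocG (fun a c1 c2 => K u a c1 c2)).
under eq_tsum do rewrite cocomG.
by rewrite (coassocG (fun a1 a2 c => K u a2 a1 c)).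
Qed.

(* Let f, g be linear coalgebra maps
   that are convolution inverse to each other; in a cocommutative Hopf
   algebra (f, g) = (id, S) and (S, id) are such pairs. *)
Section Adjoint.
Variables (f g : H -> H).
Hypotheses (lin_f : linear f) (lin_g : linear g).
Hypothesis coalg_f : forall a, D (f a) = tsum (fun p q => tens (f p) (f q)) (D a).
Hypothesis coalg_g : forall a, D (g a) = tsum (fun p q => tens (g p) (g q)) (D a).
Hypothesis conv_fg : forall h, tsum (fun a c => f a * g c) (D h) = e h *: 1.
Hypothesis conv_gf : forall h, tsum (fun a c => g a * f c) (D h) = e h *: 1.

Definition ad (h x : H) := tsum (fun a c => f a * x * g c) (D h).

Lemma ad_lin h : linear (ad h).
Proof.
apply: (@tsum_lin_param _ _ _ _ (fun x a c => f a * x * g c)) => a c.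
exact: lin_comp (lin_mulr _) (lin_mull _).
Qed.
Lemma ad_linh x : linear (fun h => ad h x).
Proof. exact: lin_comp (tsum_lin _) lin_D. Qed.

Lemma ad1 h : ad h 1 = e h *: 1.
Proof. by rewrite /ad -conv_fg; apply: eq_tsum => a c; rewrite mulr1. Qed.

Lemma D_fxg p x q : D (f p * x * g q) =
  tsum (fun a c => tsum (fun p1 p2 => tsum (fun q1 q2 =>
     tens (f p1 * a * g q1) (f p2 * c * g q2)) (D q)) (D p)) (D x).
Proof.
rewrite !DM tmul3 coalg_f tsum_tsum_tens //; last first.
  split=> [y|z].
    apply: (@tsum_lin_param _ _ _ _ (fun a a' c' => tsum _ _)) => a' c'.
    apply: (@tsum_lin_param _ _ _ _
              (fun a a'' c'' => tens (a * a' * a'') (y * c' * c''))) => a'' c''.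
    exact: lin_comp (tens_linl _) (lin_comp (lin_mulr _) (lin_mulr _)).
  apply: (@tsum_lin_param _ _ _ _ (fun c a' c' => tsum _ _)) => a' c'.
  apply: (@tsum_lin_param _ _ _ _
            (fun c a'' c'' => tens (z * a' * a'') (c * c' * c''))) => a'' c''.
  exact: lin_comp (tens_linr _) (lin_comp (lin_mulr _) (lin_mulr _)).
rewrite tsum_exch; apply: eq_tsum => p1 p2; apply: eq_tsum => a c.
by rewrite coalg_g tsum_tsum_tens //; apply: bilinear_tens (lin_mull _) (lin_mull _).
Qed.

(* ad h is "a coalgebra map in x": D (ad h x) = sum ad(h1) x1 (x) ad(h2) x2;
   this is where cocommutativity enters. *)
Lemma D_ad h x : D (ad h x) =
  tsum (fun a c => tsum (fun u v => tens (ad u a) (ad v c)) (D h)) (D x).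
Proof.
rewrite /ad (tsum_comp _ _ lin_D).
under eq_tsum do rewrite D_fxg.
rewrite [LHS]tsum_exch; apply: eq_tsum => a c.
rewrite (swap_middle (fun y1 y2 y3 y4 => tens (f y1 * a * g y3) (f y2 * c * g y4))).
apply: eq_tsum => u v.
rewrite (tsum_comp _ _ (tens_linl _)); apply: eq_tsum => p q.
by rewrite (tsum_comp _ _ (tens_linr _)).
Qed.

Lemma ad_mul h x y : ad h (x * y) = tsum (fun u v => ad u x * ad v y) (D h).
Proof.
transitivity (tsum (fun u v => tsum (fun u1 u2 => tsum (fun v1 v2 =>
   f u1 * x * g u2 * (f v1 * y * g v2)) (D v)) (D u)) (D h)); last first.
  apply: eq_tsum => u v; rewrite /ad (tsum_comp _ _ (lin_mulr _)).
  by apply: eq_tsum => u1 u2; rewrite (tsum_comp _ _ (lin_mull _)).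
rewrite (coassocG (fun u1 u2 v => tsum (fun v1 v2 =>
                      f u1 * x * g u2 * (f v1 * y * g v2)) (D v))).
apply: eq_tsum => u w.
rewrite -(coassocG (fun a c1 c2 => f u * x * g a * (f c1 * y * g c2))).
transitivity (tsum (fun q c2 => e q *: (f u * x * y * g c2)) (D w)); last first.
  apply: eq_tsum => q c2.
  have hL : linear (fun z => f u * x * z * (y * g c2)).
    exact: lin_comp (lin_mulr _) (lin_mull _).
  have E1 : tsum (fun a c1 => f u * x * g a * (f c1 * y * g c2)) (D q) =
     tsum (fun a c1 => (fun z => f u * x * z * (y * g c2)) (g a * f c1)) (D q).
    by apply: eq_tsum => a c1; rewrite !mulrA.
  by rewrite E1 -(tsum_comp _ _ hL) conv_gf /= -scalerAr -scalerAl mulr1 !mulrA.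
by rewrite (counitL _ (lin_comp (lin_mull _) lin_g)) !mulrA.
Qed.

Lemma ad_coradfilt m h x : x \in Hf m -> ad h x \in Hf m.
Proof.
elim: m h x => [|m IH] h x.
  move=> /vlineP[c ->]; rewrite (linZ (ad_lin h)) ad1.
  by apply: memvZ; apply: memvZ; apply: memv_line.
rewrite !memHfS D_ad => /memv_addP[T1 h1 [T2 h2 ->]].
set Phi := fun T => tsum (fun a c => tsum (fun u v => tens (ad u a) (ad v c)) (D h)) T.
have lPhi : linear Phi by apply: tsum_lin.
have bPhi : bilinear (fun a c => tsum (fun u v => tens (ad u a) (ad v c)) (D h)).
  split=> [y|z].
    apply: (@tsum_lin_param _ _ _ _ (fun a u v => tens (ad u a) (ad v y))) => u v.
    exact: lin_comp (tens_linl _) (ad_lin _).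
  apply: (@tsum_lin_param _ _ _ _ (fun c u v => tens (ad u z) (ad v c))) => u v.
  exact: lin_comp (tens_linr _) (ad_lin _).
rewrite -/(Phi (T1 + T2)) (linD lPhi); apply: memv_add.
  apply: (tspace_ind _ _ h1) => // a c _ hc.
  rewrite /Phi (tsum_tens _ _ bPhi); apply: tsum_mem => i j.
  by apply: tens_mem; [apply: memvf | apply: IH].
apply: (tspace_ind _ _ h2) => // a c /vlineP[l ->] _.
rewrite /Phi (tsum_tens _ _ bPhi).
have hL : linear (fun v => l *: tens 1 (ad v c)).
  exact: lin_comp (lin_scale l) (lin_comp (tens_linr 1) (ad_linh c)).
rewrite (eq_tsum (G := fun u v => e u *: (l *: tens 1 (ad v c)))).
  rewrite (counitL _ hL); apply: memvZ.
  by apply: tens_mem; [apply: memv_line | apply: memvf].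
move=> u v; rewrite (linZ (ad_lin u)) ad1 scalerA (linZ (tens_linl _)).
by rewrite mulrC -scalerA.
Qed.

(* A measuring action preserving U preserves the algebra generated by U:
   the elements x with ad h x in <<U>> for all h form a subspace containing 1
   and stable under left multiplication by U. *)
Lemma ad_agenv (U : {vspace H}) : (forall h x, x \in U -> ad h x \in U) ->
  forall h x, x \in agenv U -> ad h x \in agenv U.
Proof.
move=> hU.
set A := agenv U.
have hAA : (A * A <= A)%VS by rewrite /A agenvM subvv.
pose W := (\bigcap_(j < d) (linhom (ad_lin b`_j) @^-1: A))%VS.
have memW : forall x, reflect (forall j : 'I_d, ad b`_j x \in A) (x \in W).
  move=> x; rewrite memvE; apply: (iffP subv_bigcapP) => hx j.
    by have := hx j isT; rewrite -memvE -memv_preim linhomE.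
  by move=> _; rewrite -memvE -memv_preim linhomE.
have inW : forall x, x \in W -> forall h, ad h x \in A.
  move=> x /memW hx h; rewrite (hbasis_expand h) (lin_sum (ad_linh x)).
  by apply: memv_suml => j _; rewrite (linZ (ad_linh x)); apply: memvZ.
suff sAW : (A <= W)%VS by move=> h x /(subvP sAW) /inW; apply.
apply: agenv_sub_modl.
  rewrite -memvE; apply/memW => j; rewrite ad1; apply: memvZ.
  by rewrite memvE; apply: sub1_agenv.
apply/prodvP => u w hu /memW hw; apply/memW => j.
rewrite ad_mul; apply: tsum_mem => i i'.
apply: (subvP hAA); apply: memv_mul => //.
by apply: (subvP (sub_agenv U)); apply: hU.
Qed.
End Adjoint.

Lemma lin_idfun : linear (@idfun H). Proof. by []. Qed.
Lemma D_idfun a : D (idfun a) = tsum (fun p q => tens (idfun p) (idfun q)) (D a).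
Proof. by rewrite tsum_tens_id. Qed.

(* Normality is stability under the two adjoint actions (S, id) and (id, S);
   S-stability comes for free from step (3). *)
Lemma normal_of_ad_stable (K : {vspace H}) :
  1 \in K -> (K * K <= K)%VS -> subcoalgebra D K ->
  (forall h x, x \in K -> ad idfun S h x \in K) ->
  (forall h x, x \in K -> ad S idfun h x \in K) ->
  normal_hopf_subalgebra D S K.
Proof.
move=> K1 KK Kcoalg adK1 adK2; split; first by split=> //; apply: S_stable.
by move=> x h hx; split; [apply: adK2 | apply: adK1].
Qed.

Lemma ad_id_S_coradfilt m h x : x \in Hf m -> ad idfun S h x \in Hf m.
Proof. exact: (ad_coradfilt lin_idfun lin_S D_idfun DS antipode_r). Qed.
Lemma ad_S_id_coradfilt m h x : x \in Hf m -> ad S idfun h x \in Hf m.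
Proof. exact: (ad_coradfilt lin_S lin_idfun DS D_idfun antipode_l). Qed.

Lemma Gamma_normal p n : normal_hopf_subalgebra D S (Gamma D <[1]>%VS p n).
Proof.
case: n => [|m] /=.
  apply: normal_of_ad_stable.
  - exact: memv_line.
  - by rewrite prodv_line mulr1 subvv.
  - exact: line1_coalg.
  - exact: (ad_id_S_coradfilt (m := 0)).
  - exact: (ad_S_id_coradfilt (m := 0)).
apply: normal_of_ad_stable.
- by rewrite memvE; apply: sub1_agenv.
- by rewrite agenvM subvv.
- exact/agenv_coalg/coradfilt_coalg.
- exact/(ad_agenv lin_S antipode_r antipode_l)/ad_id_S_coradfilt.
- exact/(ad_agenv lin_idfun antipode_l antipode_r)/ad_S_id_coradfilt.
Qed.
End HopfAlgebra.

Unset Implicit Arguments. Set Strict Implicit. Set Printing Implicit Defensive.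

Theorem corollary4p6 (k : closedFieldType) (p : nat) (H : falgType k)
    (D : H -> tensor2 H) (e : H -> k) (S : H -> H) (C0 : {vspace H}) :
  prime p -> p \in [pchar k] ->
  is_hopf D e S -> cocommutative D ->
  is_coradical D C0 -> \dim C0 = 1%N ->
  forall n : nat, normal_hopf_subalgebra D S (Gamma D C0 p n).
Proof.
move=> _ _ hH cc hC0 dimC0 n.
rewrite (coradical_line1 hH hC0 dimC0).
apply: (Gamma_normal hH cc).
Qed.
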